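(* Let $IS\in\{\Box,\blacksquare\}^2$ be any initial store and let $\tau$ be a correct compositional translation from $\mathrm{SYNCSIMPLE}$ into $\mathrm{LOCKSIMPLE}_{2,IS}$ of blocking type $(P_1P_1,P_2P_2)$. Then $\tau(!)$ has no prefix in $T_1^+T_2$ and no prefix in $T_2^+T_1$.
   Context: $\mathrm{SYNCSIMPLE}$: subprocesses $\mathcal{U} ::= \checkmark \mid 0 \mid\, !\mathcal{U} \mid\, ?\mathcal{U}$; processes are finite parallel compositions ($\mid$ associative, commutative, $0$ a unit). Reduction: $!\mathcal{U}_1\mid ?\mathcal{U}_2\mid \mathcal{P}\to \mathcal{U}_1\mid\mathcal{U}_2\mid\mathcal{P}$. Successful: of form $\checkmark\mid\mathcal{P}$; may-convergent: reduces to a successful process; must-convergent: every reachable process is may-convergent. $\mathrm{LOCKSIMPLE}_{k,IS}$ ($IS\in\{\Box,\blacksquare\}^k$, $\Box$ empty, $\blacksquare$ full): subprocesses are words over $\{P_1,T_1,\dots,P_k,T_k\}$ followed by $0$ or $\checkmark$; states $(\mathcal{P},C)$ reduce by $(P_i\mathcal{U}\mid\mathcal{P},C)\to(\mathcal{U}\mid\mathcal{P},C[C_i:=\blacksquare])$ only if $C_i=\Box$, and $(T_i\mathcal{U}\mid\mathcal{P},C)\to(\mathcal{U}\mid\mathcal{P},C[C_i:=\Box])$ always. Success = process contains $\checkmark$; a process $\mathcal{P}$ is may/must-convergent iff the state $(\mathcal{P},IS)$ is. A compositional translation $\tau$ is given by words $\tau(!),\tau(?)$ with $\tau(0)=0$,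 $\tau(\checkmark)=\checkmark$, $\tau(!\mathcal{U})=\tau(!)\tau(\mathcal{U})$, $\tau(?\mathcal{U})=\tau(?)\tau(\mathcal{U})$, $\tau$ commuting with $\mid$; correct = preserves and reflects may- and must-convergence. Blocking type of a word $S$: execute $S$ alone from $IS$; if it gets stuck at an occurrence of $P_i$ that is the first symbol from $\{P_i,T_i\}$ in $S$ the type is $P_i$, if stuck at a later occurrence of $P_i$ the type is $P_iP_i$; $\tau$ has blocking type $(W_1,W_2)$ if $\tau(!)$ has type $W_1$ and $\tau(?)$ type $W_2$. $T_j^+$ denotes nonempty words consisting only of $T_j$. *)

From mathcomp Require Import all_boot.
Set Implicit Arguments. Unset Strict Implicit. Unset Printing Implicit Defensive.

Inductive star (A : Type) (R : A -> A -> Prop) : A -> A -> Prop :=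
| star_refl x : star R x x
| star_step x y z : R x y -> star R y z -> star R x z.

(* subprocesses U ::= check | 0 | !U | ?U *)
Inductive ssub : Type :=
| SCheck : ssub
| SZero : ssub
| SSend : ssub -> ssub
| SRecv : ssub -> ssub.

(* A process is a finite parallel composition, represented as a list of
   subprocesses (order is irrelevant for the semantics below: a reduction
   rewrites two components in place, success looks for any component). *)
Definition sproc := seq ssub.

Definition sred (P Q : sproc) : Prop :=
  exists (A B C : sproc) (U1 U2 : ssub),
    (P = A ++ SSend U1 :: B ++ SRecv U2 :: C /\ Q = A ++ U1 :: B ++ U2 :: C)
    \/
    (P = A ++ SRecv U2 :: B ++ SSend U1 :: C /\ Q = A ++ U2 :: B ++ U1 :: C).

Definition ssuccess (P : sproc) : Prop :=
  exists A B : sproc, P = A ++ SCheck :: B.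

Definition smay (P : sproc) : Prop :=
  exists Q, star sred P Q /\ ssuccess Q.

Definition smust (P : sproc) : Prop :=
  forall Q, star sred P Q -> smay Q.

(* symbols P_i, T_i for i : 'I_k  (paper index i+1) *)
Inductive lsym (k : nat) : Type :=
| LP : 'I_k -> lsym k
| LT : 'I_k -> lsym k.

Definition lsym_idx k (s : lsym k) : 'I_k :=
  match s with LP i => i | LT i => i end.

(* a subprocess: a word followed by 0 (false) or check (true) *)
Definition lsub (k : nat) : Type := (seq (lsym k) * bool)%type.
Definition lproc (k : nat) : Type := seq (lsub k).
(* store: true = full (black square), false = empty (white square) *)
Definition store (k : nat) : Type := {ffun 'I_k -> bool}.

Definition upd k (C : store k) (i : 'I_k) (b : bool) : store k :=
  [ffun j => if j == i then b else C j].

Definition lstate (k : nat) : Type := (lproc k * store k)%type.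

Definition lred k (s s' : lstate k) : Prop :=
  exists (A B : lproc k) (w : seq (lsym k)) (e : bool) (i : 'I_k),
    ( s.1 = A ++ (LP i :: w, e) :: B /\ s.2 i = false /\
      s'.1 = A ++ (w, e) :: B /\ s'.2 = upd s.2 i true )
    \/
    ( s.1 = A ++ (LT i :: w, e) :: B /\
      s'.1 = A ++ (w, e) :: B /\ s'.2 = upd s.2 i false ).

Definition lsuccess k (s : lstate k) : Prop :=
  exists A B : lproc k, s.1 = A ++ ([::], true) :: B.

Definition lmay k (s : lstate k) : Prop :=
  exists s', star (@lred k) s s' /\ lsuccess s'.

Definition lmust k (s : lstate k) : Prop :=
  forall s', star (@lred k) s s' -> lmay s'.

(* Compositional translations, given by the words tau(!) and tau(?)    *)
Fixpoint tr_sub k (wS wR : seq (lsym k)) (U : ssub) : lsub k :=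
  match U with
  | SCheck => ([::], true)
  | SZero => ([::], false)
  | SSend U' => let r := tr_sub wS wR U' in (wS ++ r.1, r.2)
  | SRecv U' => let r := tr_sub wS wR U' in (wR ++ r.1, r.2)
  end.

Definition tr_proc k (wS wR : seq (lsym k)) (P : sproc) : lproc k :=
  map (tr_sub wS wR) P.

Definition correct_tr k (IS : store k) (wS wR : seq (lsym k)) : Prop :=
  forall P : sproc,
    (smay P <-> lmay (tr_proc wS wR P, IS)) /\
    (smust P <-> lmust (tr_proc wS wR P, IS)).

Inductive btype (k : nat) : Type :=
| BP : 'I_k -> btype k
| BPP : 'I_k -> btype k.

(* Execute word w alone from store C; [seen] is the already executed
   prefix.  Returns the blocking type if execution gets stuck, None if the
   word runs to completion. *)
Fixpoint block_run k (C : store k) (seen w : seq (lsym k)) : option (btype k) :=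
  match w with
  | [::] => None
  | LP i :: w' =>
      if C i then
        Some (if has (fun s => lsym_idx s == i) seen then BPP i else BP i)
      else block_run (upd C i true) (rcons seen (LP i)) w'
  | LT i :: w' => block_run (upd C i false) (rcons seen (LT i)) w'
  end.

Definition blocking_type k (IS : store k) (w : seq (lsym k)) : option (btype k) :=
  block_run IS [::] w.

(* The two locks of LOCKSIMPLE_2: paper's index 1 and 2 *)
Definition l1 : 'I_2 := @Ordinal 2 0 isT.
Definition l2 : 'I_2 := @Ordinal 2 1 isT.

Definition has_prefix_Tplus_T k (i j : 'I_k) (w : seq (lsym k)) : Prop :=
  exists (n : nat) (rest : seq (lsym k)),
    w = nseq n.+1 (LT i) ++ LT j :: rest.

(* If τ(!) began with T_a^+ T_b for a ≠ b, then in LOCKSIMPLE_2 this prefix alone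
   would empty both locks.  The process !✓ | !0 | … | !0 consists of sends only,
   so it has no reduction and is not may-convergent.  Its translation is
   may-convergent: whenever the component τ(!)✓ reaches some P_i, a fresh copy of τ(!)0 first
   runs its prefix and empties every lock, so τ(!)✓ runs to completion.  This
   contradicts correctness. *)
From mathcomp Require Import all_boot.
Set Implicit Arguments.
Unset Strict Implicit.
Unset Printing Implicit Defensive.

Lemma star_trans (A : Type) (R : A -> A -> Prop) x y z :
  star R x y -> star R y z -> star R x z.
Proof. by elim=> [//|a b c Rab _ IH] /IH; apply: star_step. Qed.

Lemma star1 (A : Type) (R : A -> A -> Prop) x y : R x y -> star R x y.
Proof. by move=> Rxy; apply: star_step Rxy (star_refl _ _). Qed.

Section Locksimple.

Variable k : nat.
Implicit Types (A B E : lproc k) (C : store k) (w : seq (lsym k)).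

Lemma lred_P A B i w e C :
  C i = false -> lred (A ++ (LP i :: w, e) :: B, C) (A ++ (w, e) :: B, upd C i true).
Proof. by move=> Ci; exists A, B, w, e, i; left. Qed.

Lemma lred_T A B i w e C :
  lred (A ++ (LT i :: w, e) :: B, C) (A ++ (w, e) :: B, upd C i false).
Proof. by exists A, B, w, e, i; right. Qed.

Lemma star_lmay (s s' : lstate k) : star (@lred k) s s' -> lmay s' -> lmay s.
Proof. by move=> ss' [t [s't succ_t]]; exists t; split=> //; apply: star_trans ss' s't. Qed.

Lemma star_release (ls : seq 'I_k) w e A B C :
  exists2 C' : store k, {in ls, forall i, C' i = false} &
    star (@lred k) (A ++ (map (@LT k) ls ++ w, e) :: B, C) (A ++ (w, e) :: B, C').
Proof.
elim/last_ind: ls w => [|ls j IH] w; first by exists C => //; apply: star_refl.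
have [C' C'ls release] := IH (LT j :: w).
exists (upd C' j false).
  by move=> i; rewrite mem_rcons inE ffunE; case: eqP => // _; apply: C'ls.
rewrite map_rcons -cats1 -catA.
exact: star_trans release (star1 (lred_T _ _ _ _ _ _)).
Qed.

Lemma lmay_run_with_unlockers (ls : seq 'I_k) rest w m E C :
  (forall i, i \in ls) -> size w <= m ->
  lmay ((w, true) :: nseq m (map (@LT k) ls ++ rest, false) ++ E, C).
Proof.
set u := (map _ ls ++ rest, false) => cover.
elim: w m E C => [|[] i w IH] m E C le_wm.
- exists ((([::], true) :: nseq m u ++ E), C); split; first exact: star_refl.
  by exists [::], (nseq m u ++ E).
- case: m le_wm => // m le_wm.
  have -> : nseq m.+1 u ++ E = nseq m u ++ u :: E by elim: m {le_wm}=> //= m ->.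
  have [C' C'0 release] := star_release ls rest false ((LP i :: w, true) :: nseq m u) E C.
  apply: star_lmay release _.
  apply: star_lmay (star1 (lred_P [::] _ w true (C'0 i (cover i)))) _.
  exact: IH.
- apply: star_lmay (star1 (lred_T [::] _ i w true C)) _.
  exact: IH (ltnW le_wm).
Qed.

End Locksimple.

Definition is_send (U : ssub) : bool := if U is SSend _ then true else false.

Lemma sends_irreducible (P Q : sproc) : all is_send P -> ~ sred P Q.
Proof.
by move=> sendsP [A [B [C [U1 [U2 [[PE _]|[PE _]]]]]]];
  move: sendsP; rewrite PE !(all_cat, andbF) /= ?(all_cat, andbF).
Qed.

Lemma sends_not_ssuccess (P : sproc) : all is_send P -> ~ ssuccess P.
Proof. by move=> sendsP [A [B PE]]; move: sendsP; rewrite PE all_cat /= andbF. Qed.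

Lemma sends_not_smay (P : sproc) : all is_send P -> ~ smay P.
Proof.
move=> sendsP [Q [PQ succQ]].
case: PQ sendsP succQ => [R|R S T RS _] sendsR; first exact: sends_not_ssuccess.
by case: (sends_irreducible sendsR RS).
Qed.

Lemma tr_proc_sends k (wS wR : seq (lsym k)) n :
  tr_proc wS wR (SSend SCheck :: nseq n (SSend SZero)) = (wS, true) :: nseq n (wS, false).
Proof. by rewrite /tr_proc /= map_nseq /= cats0. Qed.

Lemma correct_tr_no_unlocking_prefix k (IS : store k) wS wR (ls : seq 'I_k) rest :
  correct_tr IS wS wR -> (forall i, i \in ls) -> wS <> map (@LT k) ls ++ rest.
Proof.
move=> correct cover wSE.
pose P := SSend SCheck :: nseq (size wS) (SSend SZero).
apply: (@sends_not_smay P); first by rewrite /= all_nseq orbT.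
apply/(proj1 (correct P)); rewrite tr_proc_sends.
have := lmay_run_with_unlockers rest [::] IS cover (leqnn (size wS)).
by rewrite cats0 -wSE.
Qed.

Lemma mem_ord2 (a b i : 'I_2) : a != b -> (i == a) || (i == b).
Proof. by case: a b i => [[|[|//]] ?] [[|[|//]] ?] [[|[|//]] ?]. Qed.

Lemma correct_tr_no_prefix_Tplus_T (IS : store 2) wS wR (a b : 'I_2) :
  correct_tr IS wS wR -> a != b -> ~ has_prefix_Tplus_T a b wS.
Proof.
move=> correct neq_ab [n [rest wSE]].
apply: (correct_tr_no_unlocking_prefix (ls := rcons (nseq n.+1 a) b) (rest := rest) correct).
  move=> i; rewrite mem_rcons inE /= in_cons mem_nseq /=.
  by case/orP: (mem_ord2 i neq_ab) => ->; rewrite ?orbT.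
by rewrite wSE map_rcons map_nseq -cats1 -catA.
Qed.

Theorem lemma5p3 (IS : store 2) (wS wR : seq (lsym 2)) :
  correct_tr IS wS wR ->
  blocking_type IS wS = Some (BPP l1) ->
  blocking_type IS wR = Some (BPP l2) ->
  ~ has_prefix_Tplus_T l1 l2 wS /\ ~ has_prefix_Tplus_T l2 l1 wS.
Proof.
by move=> correct _ _; split; apply: correct_tr_no_prefix_Tplus_T correct _.
Qed.
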